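(* Let $P$ be a finite poset and $Q$ a poset ideal of $P$. Then the following are equivalent: (1) $\tilde\chi(\{y\in Q\mid y<x\})=0$ for every $x\in(P\cup\{\infty\})\setminus Q$; (2) $\tilde\chi((-\infty,x)_P)=0$ for every $x\in(P\cup\{\infty\})\setminus Q$.
   Context: A poset ideal is a downward closed subset. $\infty$ (resp. $-\infty$) is a new element larger (resp. smaller) than all elements of $P$, and $(-\infty,x)_P=\{z\in P:z<x\}$. For a finite poset $S$, $\tilde\chi(S)=\sum_{\sigma}(-1)^{|\sigma|-1}$, the sum over all chains $\sigma$ of $S$ including the empty chain. *)

From HB Require Import structures.
From mathcomp Require Import all_boot all_order all_algebra.
Set Implicit Arguments. Unset Strict Implicit. Unset Printing Implicit Defensive.
Import Order.TTheory GRing.Theory Num.Theory.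
Local Open Scope order_scope.

Section Defs.
Context {disp : Order.disp_t} {P : finPOrderType disp}.

Definition is_chain (C : {set P}) : bool :=
  [forall a in C, forall b in C, (a <= b) || (b <= a)].

Definition is_ideal (Q : {set P}) : Prop :=
  forall x y : P, y <= x -> x \in Q -> y \in Q.

(* reduced Euler characteristic: sum over all chains sigma of S (including
   the empty chain) of (-1)^(|sigma| - 1), computed in int as -(-1)^|sigma| *)
Definition rchi (S : {set P}) : int :=
  \sum_(C : {set P} | (C \subset S) && is_chain C) (- (-1) ^+ #|C|)%R.

(* P ∪ {∞} is modelled by option P, with None = ∞ *)
Definition in_ext (Q : {set P}) (x : option P) : bool :=
  if x is Some a then a \in Q else false.

(* (-∞, x)_P = { z in P | z < x }; for x = ∞ this is all of P *)
Definition below (x : option P) : {set P} :=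
  if x is Some a then [set z | z < a] else setT.

End Defs.

From HB Require Import structures.
From mathcomp Require Import all_boot all_order all_algebra.
Import Order.TTheory GRing.Theory Num.Theory.
Set Implicit Arguments. Unset Strict Implicit. Unset Printing Implicit Defensive.
Local Open Scope order_scope.

(* Cut a chain C of (-oo, x) not contained in Q at its least element m outside
   Q.  As Q is an ideal, C is the disjoint union of the chain C :&: Q of
   Q :&: (-oo, m) and of the chain C :\: Q of (-oo, x) :\: Q with least element
   m, and every such pair arises.  So the chains with a given m contribute
   rchi (Q :&: (-oo, m)) times a signed count, and when all these vanish,
   rchi (-oo, x) = rchi (Q :&: (-oo, x)).  This gives (1) -> (2) at once, and
   (2) -> (1) by well-founded induction on m outside Q, then for x = oo. *)

Section FinPOrder.
Context {disp : Order.disp_t} {P : finPOrderType disp}.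
Implicit Types (a b c m : P) (Q S C A D : {set P}) (x : option P).

Lemma lt_ind (Pr : P -> Prop) :
  (forall a, (forall b, b < a -> Pr b) -> Pr a) -> forall a, Pr a.
Proof.
move=> IH a; have [n lt_a_n] := ubnP #|[set b | b < a]|.
elim: n a lt_a_n => // n IHn a; rewrite ltnS => le_a_n; apply: IH => b ltba.
apply: IHn; apply: leq_trans (proper_card _) le_a_n; apply/properP; split.
  by apply/subsetP => z; rewrite !inE => /lt_trans; apply.
by exists b; rewrite !inE ?ltxx.
Qed.

Lemma chainP C :
  reflect (forall a b, a \in C -> b \in C -> (a <= b) || (b <= a)) (is_chain C).
Proof.
apply: (iffP forall_inP) => [chC a b aC bC | chC a aC].
  exact: forall_inP (chC a aC) b bC.
by apply/forall_inP => b; apply: chC.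
Qed.

Lemma sub_chain C D : C \subset D -> is_chain D -> is_chain C.
Proof.
by move=> /subsetP sCD /chainP chD; apply/chainP => a b /sCD aD /sCD; apply: chD.
Qed.

Lemma chain_has_least C c0 : is_chain C -> c0 \in C ->
  exists2 c, c \in C & forall c', c' \in C -> c <= c'.
Proof.
move=> /chainP chC; elim/lt_ind: c0 => c0 IH c0C.
have [/forall_inP least | /forall_inPn[c cC /negbTE c0c]] :=
  boolP [forall (c | c \in C), c0 <= c].
  by exists c0.
apply: (IH c) => //; have := chC c0 c c0C cC; rewrite c0c /= => cc0.
by rewrite lt_def cc0 andbT; apply: contraFN c0c => /eqP ->.
Qed.

Lemma below_lt_closed x m b : m \in below x -> b < m -> b \in below x.
Proof. by case: x => [a|] //=; rewrite !inE => /[swap]; apply: lt_trans. Qed.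

Definition chain_in S C := (C \subset S) && is_chain C.

Lemma rchiE S : rchi S = (\sum_(C | chain_in S C) - (-1) ^+ #|C|)%R.
Proof. by []. Qed.

Section IdealSplit.
Variable Q : {set P}.
Hypothesis idealQ : is_ideal Q.

Definition least_outside C m :=
  [&& m \in C, m \notin Q & [forall (c | c \in C), (c \notin Q) ==> (m <= c)]].

Lemma least_outside_unique C : is_chain C -> ~~ (C \subset Q) ->
  exists c, least_outside C =1 pred1 c.
Proof.
move=> chC; rewrite -setD_eq0 => /set0Pn[c0 c0CQ].
have [c cCQ c_least] := chain_has_least (sub_chain (subsetDl C Q) chC) c0CQ.
have [cC cQ] := setDP cCQ.
exists c => m /=; apply/and3P/eqP => [[mC mQ /forall_inP m_least] | ->].
  by apply: le_anti; rewrite c_least ?inE ?mC ?mQ // (implyP (m_least c cC) cQ).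
split=> //; apply/forall_inP => c' c'C; apply/implyP => c'Q.
by apply: c_least; rewrite inE c'Q.
Qed.

Lemma least_outside_lt C m a : is_chain C -> least_outside C m ->
  a \in C -> a \in Q -> a < m.
Proof.
move=> /chainP chC /and3P[mC mQ _] aC aQ.
have [ma | am] := orP (chC m a mC aC).
  by rewrite (idealQ ma aQ) in mQ.
by rewrite lt_def am andbT; apply: contraNneq mQ => ->.
Qed.

Lemma least_outside_split x C m : m \in below x -> m \notin Q ->
  chain_in (below x) C && least_outside C m =
  chain_in (Q :&: below (Some m)) (C :&: Q) &&
  (chain_in (below x :\: Q) (C :\: Q) && least_outside (C :\: Q) m).
Proof.
move=> mx mQ; apply/idP/idP.
  move=> /andP[/andP[sCx chC] Cm]; have /and3P[mC _ /forall_inP m_least] := Cm.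
  rewrite /chain_in !(sub_chain _ chC) ?subsetIl ?subsetDl // !andbT.
  apply/and3P; split.
  - apply/subsetP => a /setIP[aC aQ]; rewrite !inE aQ.
    exact: least_outside_lt chC Cm aC aQ.
  - exact: setSD.
  - rewrite /least_outside inE mQ mC; apply/forall_inP => c /setDP[cC _].
    exact: m_least.
move=> /andP[/andP[sA /chainP chA]].
move=> /andP[/andP[sD /chainP chD] /and3P[mD _ /forall_inP m_least]].
have inQ_lt a : a \in C -> a \in Q -> a < m.
  by move=> aC aQ; have /subsetP/(_ a) := sA; rewrite !inE aC aQ => /(_ isT).
have notinQ_ge a : a \in C -> a \notin Q -> m <= a.
  by move=> aC aQ; rewrite (implyP (m_least a _)) // inE aC aQ.
have notinQ_below a : a \in C -> a \notin Q -> a \in below x.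
  by move=> aC aQ; have /subsetP/(_ a) := sD; rewrite !inE aC aQ => /(_ isT).
have [mC _] := setDP mD.
apply/andP; split; [apply/andP; split | apply/and3P; split] => //.
- apply/subsetP => a aC; have [aQ|aQ] := boolP (a \in Q); last exact: notinQ_below.
  exact: below_lt_closed mx (inQ_lt a aC aQ).
- apply/chainP => a b aC bC.
  have [aQ|aQ] := boolP (a \in Q); have [bQ|bQ] := boolP (b \in Q).
  + by apply: chA; rewrite inE ?aC ?bC.
  + by rewrite (ltW (lt_le_trans (inQ_lt a aC aQ) (notinQ_ge b bC bQ))).
  + by rewrite (ltW (lt_le_trans (inQ_lt b bC bQ) (notinQ_ge a aC aQ))) orbT.
  + by apply: chD; rewrite inE ?aC ?bC ?aQ ?bQ.
- by apply/forall_inP => c cC; apply/implyP; apply: notinQ_ge.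
Qed.

Lemma setU_split S A D : A \subset Q -> D \subset S :\: Q ->
  (A :|: D) :&: Q = A /\ (A :|: D) :\: Q = D.
Proof.
rewrite subsetD => sAQ /andP[_ dDQ]; have /eqP AQ0 : A :\: Q == set0 by rewrite setD_eq0.
rewrite setIUl setDUl (setIidPl sAQ) (disjoint_setI0 dDQ) (setDidPl dDQ) AQ0.
by rewrite setU0 set0U.
Qed.

Lemma sum_least_outside x m : m \in below x -> m \notin Q ->
  (\sum_(C | chain_in (below x) C && least_outside C m) - (-1) ^+ #|C|
   = rchi (Q :&: below (Some m)) *
     \sum_(D | chain_in (below x :\: Q) D && least_outside D m) (-1) ^+ #|D|)%R.
Proof.
move=> mx mQ; rewrite rchiE big_distrlr pair_big_dep /=.
rewrite (reindex_onto (fun p : {set P} * {set P} => p.1 :|: p.2)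
  (fun C => (C :&: Q, C :\: Q))) /=; last by move=> C _; rewrite setID.
symmetry; apply: eq_big => [[A D] | [A D]] /=.
  rewrite least_outside_split //; apply/idP/andP => [splitAD | [splitAD /eqP[eA eD]]].
    have /andP[/andP[/subsetIP[sAQ _] _] /andP[/andP[sD _] _]] := splitAD.
    by have [-> ->] := setU_split sAQ sD.
  by move: splitAD; rewrite eA eD.
move=> /andP[/andP[/subsetIP[sAQ _] _] /andP[/andP[sD _] _]].
rewrite -(cardsID Q (A :|: D)); have [-> ->] := setU_split sAQ sD.
by rewrite exprD mulNr.
Qed.

Lemma sum_chains_not_sub_ideal x :
  (forall m, m \in below x -> m \notin Q -> rchi (Q :&: below (Some m)) = 0%R) ->
  (\sum_(C | chain_in (below x) C && ~~ (C \subset Q)) - (-1) ^+ #|C| : int)%R = 0%R.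
Proof.
move=> rchiQm0.
rewrite (eq_bigr (fun C => \sum_(m | least_outside C m) - (-1) ^+ #|C|)%R); last first.
  move=> C /andP[/andP[_ chC] CnQ].
  by have [c least_c] := least_outside_unique chC CnQ; rewrite (big_pred1 c).
rewrite (exchange_big_dep (fun m => m \in below x :\: Q)) /=; last first.
  by move=> C m /andP[/andP[sCx _] _] /and3P[mC mQ _]; rewrite inE mQ (subsetP sCx).
apply: big1 => m /setDP[mx mQ].
rewrite (eq_bigl (fun C => chain_in (below x) C && least_outside C m)).
  by rewrite sum_least_outside // rchiQm0 ?mul0r.
move=> C; rewrite -andbA; apply: andb_id2l => _; apply/andb_idl.
by move=> /and3P[mC _ _]; apply: contra mQ => /subsetP; apply.
Qed.

Lemma rchi_below_ideal x :
  (forall m, m \in below x -> m \notin Q -> rchi (Q :&: below (Some m)) = 0%R) ->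
  rchi (below x) = rchi (Q :&: below x).
Proof.
move=> rchiQm0; rewrite !rchiE (bigID (fun C => C \subset Q)) /=.
rewrite sum_chains_not_sub_ideal // addr0; apply: eq_bigl => C.
by rewrite /chain_in subsetI andbC andbA.
Qed.

End IdealSplit.

End FinPOrder.

Theorem lemma6p10 (disp : Order.disp_t) (P : finPOrderType disp) (Q : {set P}) :
  is_ideal Q ->
  ((forall x : option P, ~~ in_ext Q x -> rchi (Q :&: below x) = 0%R) <->
   (forall x : option P, ~~ in_ext Q x -> rchi (below x) = 0%R)).
Proof.
move=> idealQ; split=> [rchiQ0 x xQ | rchi0].
  by rewrite (rchi_below_ideal idealQ) ?rchiQ0 // => m _; apply: rchiQ0 (Some m).
have rchiQ0 : forall a, a \notin Q -> rchi (Q :&: below (Some a)) = 0%R.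
  apply: lt_ind => a IH aQ; rewrite -(rchi_below_ideal idealQ) ?(rchi0 (Some a)) //.
  by move=> m; rewrite inE => /IH.
case=> [a /rchiQ0 // | _].
by rewrite -(rchi_below_ideal idealQ) ?(rchi0 None) // => m _ /rchiQ0.
Qed.
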